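(* Let $X$ be a path connected topological quandle. Then $H_0(X)$ and $H^R_1(X)$ are isomorphic.
   Context: A quandle is a set with a binary operation $\triangleright$ such that $x\triangleright x=x$, each $\beta_y(x)=x\triangleright y$ is bijective, and $(x\triangleright y)\triangleright z=(x\triangleright z)\triangleright(y\triangleright z)$. A topological quandle is a topological space with a continuous quandle operation such that every $\beta_y$ is a homeomorphism. $C_0(X)$ is the free abelian group on points of $X$ (constant 0-simplices $\sigma_x$), $C_1(X)$ the free abelian group on paths $\sigma:[0,1]\to X$; for a path $\sigma_{[a,b]}$ from $a$ to $b$, $\partial_1\sigma_{[a,b]}=\sigma_a-\sigma_{a\triangleright b}$; $H_0(X)=C_0(X)/\partial_1(C_1(X))$. The rack chain complex $C^R_n(X)$ is the free abelian group on $n$-tuples $(x_1,\dots,x_n)\in X^n$ with boundary $\partial^R_n(x_1,\dots,x_n)=\sum_{i=2}^n(-1)^i\big[(x_1,\dots,\hat{x_i},\dots,x_n)-(x_1\triangleright x_i,\dots,x_{i-1}\triangleright x_i,x_{i+1},\dots,x_n)\big]$; $H^R_n(X)$ is its $n$-th homology. In particular $H^R_1(X)=C^R_1(X)/\partial^R_2(C^R_2(X))$ with $\partial^R_2(x_1,x_2)=(x_1)-(x_1\triangleright x_2)$. *)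

From HB Require Import structures.
From mathcomp Require Import all_boot all_order all_algebra.
From mathcomp Require Import all_classical all_reals topology.
From mathcomp Require Import Rstruct Rstruct_topology.
From mathcomp Require freeg.
Export freeg.FreegDefs.Exports freeg.FreegZmodType freeg.FreegZmodType.Exports.

Set Implicit Arguments.
Unset Strict Implicit.
Unset Printing Implicit Defensive.

Import Order.TTheory GRing.Theory Num.Theory.
Local Open Scope classical_set_scope.
Local Open Scope ring_scope.

Definition qbeta {X : Type} (op : X -> X -> X) (y : X) : X -> X :=
  fun x => op x y.

Definition is_quandle {X : Type} (op : X -> X -> X) : Prop :=
  [/\ (forall x, op x x = x),
      (forall y, bijective (qbeta op y)) &
      (forall x y z, op (op x y) z = op (op x z) (op y z))].

Definition is_homeomorphism {X Y : topologicalType} (f : X -> Y) : Prop :=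
  exists g : Y -> X,
    [/\ cancel f g, cancel g f, continuous f & continuous g].

Definition is_topological_quandle {X : topologicalType} (op : X -> X -> X)
  : Prop :=
  [/\ is_quandle op,
      continuous (fun p : X * X => op p.1 p.2) &
      (forall y, is_homeomorphism (qbeta op y))].

Definition is_path {X : topologicalType} (g : Rdefinitions.R -> X) (a b : X) : Prop :=
  [/\ {within `[0%R, 1%R], continuous g}, g 0%R = a & g 1%R = b].

Definition path_connected (X : topologicalType) : Prop :=
  forall a b : X, exists g : Rdefinitions.R -> X, is_path g a b.

Notation freeZ X := (freeg.FreegDefs.type_of (Phant int) (Phant X)).

Definition fgen {X : choiceType} (x : X) : freeZ X :=
  freeg.Freeg [:: (1%:Z, x)].

Inductive zspan (V : zmodType) (G : set V) : V -> Prop :=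
| zspan0 : zspan G 0
| zspan_gen g : G g -> zspan G g
| zspan_sub x y : zspan G x -> zspan G y -> zspan G (x - y).

(* "V / A is isomorphic to W / B" for subgroups A of V and B of W, with V
   free (so that every homomorphism V/A -> W/B lifts to V -> W): there is a
   group homomorphism f : V -> W inducing a well defined, injective and
   surjective map V/A -> W/B. *)
Definition quot_isomorphic (V W : zmodType) (A : set V) (B : set W) : Prop :=
  exists f : {additive V -> W},
    [/\ (forall v, A v -> B (f v)),
        (forall v, B (f v) -> A v) &
        (forall w, exists v, B (w - f v))].

(* H_0(X) = C_0(X) / d_1(C_1(X)).  C_1(X) is free on paths; the image of
   the linear map d_1 is the subgroup generated by the images of the
   generators: d_1 sigma_[a,b] = sigma_a - sigma_(a |> b) for a path
   sigma from a to b. *)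
Definition boundary1_image {X : topologicalType} (op : X -> X -> X)
  : set (freeZ X) :=
  zspan [set v | exists a b (g : Rdefinitions.R -> X), is_path g a b /\
                   v = fgen a - fgen (op a b)].

(* H^R_1(X) = C^R_1(X) / d^R_2(C^R_2(X)), with C^R_1(X) free on X and
   d^R_2 (x1, x2) = (x1) - (x1 |> x2). *)
Definition rack_boundary2_image {X : choiceType} (op : X -> X -> X)
  : set (freeZ X) :=
  zspan [set v | exists x1 x2, v = fgen x1 - fgen (op x1 x2)].

From mathcomp Require Import all_boot all_order all_algebra.
From mathcomp Require Import all_classical all_reals topology.

Import GRing.Theory.

(* In a path connected space every pair (a, b) is joined by a path, so the
   generators sigma_a - sigma_(a |> b) of d_1(C_1(X)) are exactly the
   generators (a) - (a |> b) of d^R_2(C^R_2(X)). Both homology groups are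
   therefore the same quotient of the free abelian group on X, and the
   identity induces the isomorphism. *)

Local Open Scope classical_set_scope.
Local Open Scope ring_scope.

Lemma sub_zspan (V : zmodType) (G G' : set V) :
  G `<=` G' -> zspan G `<=` zspan G'.
Proof.
move=> sGG' v; elim=> [|g /sGG'|x y _ Hx _ Hy].
- exact: zspan0.
- exact: zspan_gen.
- exact: zspan_sub.
Qed.

Lemma quot_isomorphic_zspan_id (V : zmodType) (G G' : set V) :
  G `<=` G' -> G' `<=` G -> quot_isomorphic (zspan G) (zspan G').
Proof.
move=> sGG' sG'G; exists idfun; split=> /=.
- exact: sub_zspan.
- exact: sub_zspan.
- by move=> w; exists w; rewrite subrr; apply: zspan0.
Qed.

Theorem mainTheorem9 (X : topologicalType) (op : X -> X -> X) :
  is_topological_quandle op ->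
  path_connected X ->
  quot_isomorphic (boundary1_image op) (rack_boundary2_image op).
Proof.
move=> _ pc; apply: quot_isomorphic_zspan_id => v.
- by case=> a [b [g [_ ->]]]; exists a, b.
- by case=> a [b ->]; have [g pg] := pc a b; exists a, b, g.
Qed.
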